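(* Let $\mathcal{L}(W;g)$ be a real-valued function of parameters $W=\{w^{(1)},\dots,w^{(m)}\}$ (vectors) and $g$, which is twice continuously differentiable at every point with all $w^{(j)}\neq0$, and such that each $w^{(j)}$ is scale-invariant: $\mathcal{L}(\dots,c\,w^{(j)},\dots)=\mathcal{L}(\dots,w^{(j)},\dots)$ for all $c>0$. Fix $i$ and suppose that for every $(V;g)$ with all $\|v^{(j)}\|_2=1$, the Hessian of $\mathcal{L}$ with respect to the block $w^{(i)}$ at $(V;g)$ has spectral norm at most $L^{\mathrm{vv}}_{ii}$. Then for any $W$ (with all $w^{(j)}\neq0$) and $g$, $$\left\|\nabla_{w^{(i)}}\mathcal{L}(W;g)\right\|_2\le\frac{\pi L^{\mathrm{vv}}_{ii}}{\|w^{(i)}\|_2}.$$ *)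

From HB Require Import structures.
From mathcomp Require Import all_boot all_order all_algebra.
From mathcomp Require Import all_classical all_reals all_analysis.
Set Implicit Arguments. Unset Strict Implicit. Unset Printing Implicit Defensive.
Import Order.TTheory GRing.Theory Num.Theory.
Import numFieldNormedType.Exports.
Local Open Scope classical_set_scope.
Local Open Scope ring_scope.

(* The full parameter (W; g) is a vector x in R^N, split into blocks by
   blk : 'I_N -> option 'I_m : coordinate k belongs to w^(j) if blk k = Some j,
   and to g if blk k = None. *)

Section Defs.
Variables (R : realType) (N m : nat).
Notation V := 'rV[R]_N.

Definition ev (k : 'I_N) : V := delta_mx 0 k.

Definition partial (f : V -> R) (k : 'I_N) : V -> R := fun x => 'D_(ev k) f x.

Definition norm2 (v : V) : R := Num.sqrt (\sum_k v 0 k ^+ 2).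

Definition C2_on (U : set V) (f : V -> R) : Prop :=
  forall x, U x ->
    {for x, continuous f} /\
    forall k, derivable f x (ev k) /\ {for x, continuous (partial f k)} /\
      forall l, derivable (partial f k) x (ev l) /\
                {for x, continuous (partial (partial f k) l)}.

Variable blk : 'I_N -> option 'I_m.

Definition blockvec (b : option 'I_m) (x : V) : V :=
  \row_k (if blk k == b then x 0 k else 0).

Definition dom_nz : set V := fun x => forall j : 'I_m, blockvec (Some j) x != 0.

Definition scale_block (j : 'I_m) (c : R) (x : V) : V :=
  \row_k (if blk k == Some j then c * x 0 k else x 0 k).

Definition grad_block (f : V -> R) (i : 'I_m) (x : V) : V :=
  \row_k (if blk k == Some i then partial f k x else 0).

Definition hess_block (f : V -> R) (i : 'I_m) (x : V) : 'M[R]_N :=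
  \matrix_(k, l) (if (blk k == Some i) && (blk l == Some i)
                  then partial (partial f l) k x else 0).

End Defs.

Definition mxv (R : realType) (N : nat) (A : 'M[R]_N) (v : 'rV[R]_N) : 'rV[R]_N :=
  \row_k \sum_l A k l * v 0 l.

Definition specnorm (R : realType) (N : nat) (A : 'M[R]_N) : R :=
  sup [set norm2 (mxv A v) | v in [set v : 'rV[R]_N | norm2 v = 1]].

From HB Require Import structures.
From mathcomp Require Import all_boot all_order all_algebra.
From mathcomp Require Import all_classical all_reals all_analysis.
From mathcomp Require Import ring lra.
Set Implicit Arguments. Unset Strict Implicit. Unset Printing Implicit Defensive.
Import Order.TTheory GRing.Theory Num.Theory.
Import numFieldNormedType.Exports.
Local Open Scope classical_set_scope.
Local Open Scope ring_scope.

(* Scale invariance in the block w^(i) makes the block gradient homogeneous of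
   degree -1 in w^(i) and orthogonal to w^(i) (Euler's identity), so it is
   enough to bound it when every block has unit norm.  There, let u = w^(i)
   and let d be the unit vector along the block gradient G, and follow the
   great circle t |-> (.., cos t u + sin t d, ..) in the i-th block.  The loss
   phi(t) along it satisfies phi'(0) = |G|, and |phi''| <= L_ii because the
   acceleration of the circle is radial, hence orthogonal to the gradient.
   Since phi(-pi) = phi(pi), Rolle gives phi'(th) = 0 for some |th| < pi, and
   the mean value inequality yields |G| = |phi'(0) - phi'(th)| <= pi L_ii. *)

Section RealFunctions.
Variable R : realType.
Implicit Types (a b t L : R).

Lemma is_derive_unique (h : R -> R) t d1 d2 :
  is_derive t 1 h d1 -> is_derive t 1 h d2 -> d1 = d2.
Proof.
by move=> h1 h2; rewrite -(@derive_val _ _ _ _ _ _ _ h1) -(@derive_val _ _ _ _ _ _ _ h2).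
Qed.

Lemma normr_le_between0 (s a : R) :
  Num.min 0 a <= s <= Num.max 0 a -> `|s| <= `|a|.
Proof.
case: (leP 0 a) => a0 /andP[lo hi]; first by rewrite !ger0_norm // (le_trans lo).
by rewrite ler0_norm // ltr0_norm // lerN2.
Qed.

Lemma ler_abs_increment (h dh : R -> R) L a b :
  (forall s, Num.min a b <= s <= Num.max a b ->
     is_derive s 1 h (dh s) /\ `|dh s| <= L) ->
  `|h b - h a| <= L * `|b - a|.
Proof.
wlog leab : a b / a <= b => [wlog_ab|].
  have [|leba] := orP (le_total a b); first exact: wlog_ab.
  by rewrite minC maxC distrC [`|b - a|]distrC; exact: wlog_ab.
rewrite (min_idPl leab) (max_idPr leab) => hder.
have hcont : {within `[a, b], continuous h}.
  apply: derivable_within_continuous => s; rewrite in_itv /= => /hder[? _].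
  exact: ex_derive.
have [c] := MVT_segment leab
  (fun s sab => (hder s (subset_itv_oo_cc sab)).1) hcont.
rewrite in_itv /= => /hder[_ dhcL] ->.
by rewrite normrM [`|b - a|]ger0_norm ?subr_ge0 // ler_wpM2r // subr_ge0.
Qed.

Lemma abs_derive_mid_le (phi psi : R -> R) a L : 0 < a ->
  (forall t, is_derive t 1 phi (psi t)) ->
  (forall t, exists2 D, is_derive t 1 psi D & `|D| <= L) ->
  phi (- a) = phi a -> `|psi 0| <= a * L.
Proof.
move=> a_gt0 dphi dpsi phi_ends.
have [th] : exists2 th, th \in `]- a, a[ & is_derive th 1 phi 0.
  apply: Rolle => //; first by rewrite gtrN.
  by apply: derivable_within_continuous => t _.
rewrite in_itv /= => /andP[tha_lo tha_hi] /(is_derive_unique (dphi th)) psi_th.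
have L_ge0 : 0 <= L by have [D _ DL] := dpsi 0; exact: le_trans (normr_ge0 D) DL.
have : `|psi 0 - psi th| <= L * `|0 - th|.
  apply: (@ler_abs_increment psi ('D_1 psi)) => s _; have [D dD DL] := dpsi s.
  by rewrite (@derive_val _ _ _ _ _ _ _ dD).
rewrite psi_th subr0 sub0r normrN => /le_trans; apply.
by rewrite mulrC ler_wpM2r // ler_norml !ltW // ltrNl.
Qed.

Variable W : normedModType R.
Implicit Types (p : R -> W) (w z dp : W).

Lemma is_derive_continuous p t dp : is_derive t 1 p dp -> {for t, continuous p}.
Proof. by move=> dpt; apply/differentiable_continuous/derivable1_diffP; exact: ex_derive. Qed.

Lemma is_derive_quotient p t dp : is_derive t 1 p dp ->
  (fun h => h^-1 *: (p (h + t) - p t)) @ 0^' --> dp.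
Proof.
move=> [dp_t <-].
have -> : (fun h => h^-1 *: (p (h + t) - p t)) =
    (fun h => h^-1 *: ((p \o shift t) (h *: 1) - p t)).
  by apply/funext => h; rewrite /= [h *: 1]mulr1.
exact: dp_t.
Qed.

Lemma is_derive_shift_cvg p t dp : is_derive t 1 p dp -> (fun h => p (h + t)) @ 0^' --> p t.
Proof.
move=> /is_derive_continuous; rewrite continuous_shift.
by move=> /continuous_withinNx; rewrite /= add0r.
Qed.

Lemma is_deriveZl (k : R -> R) w t (dk : R) :
  is_derive t 1 k dk -> is_derive t 1 (fun s => k s *: w) (dk *: w).
Proof.
move=> dkt; have dk_t : differentiable k t by apply/derivable1_diffP; exact: ex_derive.
have dkw : differentiable (fun s => k s *: w) t by exact: differentiableZl.
apply: DeriveDef; first exact/derivable1_diffP.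
by rewrite deriveE // diffZl // -deriveE // derive_val.
Qed.

Lemma is_derive_affine z w t : is_derive t 1 (fun s => z + s *: w) w.
Proof.
apply: is_derive_eq (is_deriveD (is_derive_cst z t 1) (is_deriveZl w (is_derive_id t 1))) _.
by rewrite add0r scale1r.
Qed.

End RealFunctions.

Section EuclideanSpace.
Variables (R : realType) (N : nat).
Local Notation V := 'rV[R]_N.
Implicit Types (a b c w : V) (A : 'M[R]_N).

Definition dotv a b : R := \sum_k a 0 k * b 0 k.

Lemma dotvC a b : dotv a b = dotv b a.
Proof. by apply: eq_bigr => k _; rewrite mulrC. Qed.

Lemma dotvDl a b c : dotv (a + b) c = dotv a c + dotv b c.
Proof. by rewrite -big_split; apply: eq_bigr => k _; rewrite mxE mulrDl. Qed.

Lemma dotvZl r a b : dotv (r *: a) b = r * dotv a b.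
Proof. by rewrite mulr_sumr; apply: eq_bigr => k _; rewrite mxE mulrA. Qed.

Lemma dotvNl a b : dotv (- a) b = - dotv a b.
Proof. by rewrite -scaleN1r dotvZl mulN1r. Qed.

Lemma dotvDr a b c : dotv a (b + c) = dotv a b + dotv a c.
Proof. by rewrite dotvC dotvDl !(dotvC a). Qed.

Lemma dotvZr r a b : dotv a (r *: b) = r * dotv a b.
Proof. by rewrite dotvC dotvZl dotvC. Qed.

Lemma dotvNr a b : dotv a (- b) = - dotv a b.
Proof. by rewrite -scaleN1r dotvZr mulN1r. Qed.

Lemma dotv_ev a k : dotv a (ev R k) = a 0 k.
Proof.
rewrite /dotv (bigD1 k) //= big1 => [|l lk]; first by rewrite /ev mxE !eqxx mulr1 addr0.
by rewrite /ev mxE (negPf lk) andbF mulr0.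
Qed.

Lemma dotvv a : dotv a a = \sum_k a 0 k ^+ 2.
Proof. by apply: eq_bigr => k _; rewrite expr2. Qed.

Lemma dotvv_ge0 a : 0 <= dotv a a.
Proof. by rewrite dotvv sumr_ge0 // => k _; exact: sqr_ge0. Qed.

Lemma dotvv_eq0 a : (dotv a a == 0) = (a == 0).
Proof.
apply/idP/eqP => [|->]; last by rewrite /dotv big1 // => k _; rewrite mxE mul0r.
rewrite dotvv psumr_eq0 => [/allP a0|k _]; last exact: sqr_ge0.
apply/rowP => k; rewrite mxE; apply/eqP; rewrite -sqrf_eq0.
exact: implyP (a0 k (mem_index_enum k)) isT.
Qed.

Lemma norm2E a : norm2 a = Num.sqrt (dotv a a).
Proof. by rewrite dotvv. Qed.

Lemma norm2_ge0 a : 0 <= norm2 a.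
Proof. exact: sqrtr_ge0. Qed.

Lemma norm2_sqr a : norm2 a ^+ 2 = dotv a a.
Proof. by rewrite norm2E sqr_sqrtr // dotvv_ge0. Qed.

Lemma norm2_eq1 a : norm2 a = 1 <-> dotv a a = 1.
Proof.
rewrite norm2E; split=> [/(congr1 (fun r => r ^+ 2))|->]; last by rewrite sqrtr1.
by rewrite sqr_sqrtr ?dotvv_ge0 // expr1n.
Qed.

Lemma norm2_eq0 a : (norm2 a == 0) = (a == 0).
Proof. by rewrite norm2E sqrtr_eq0 le_eqVlt ltNge dotvv_ge0 orbF dotvv_eq0. Qed.

Lemma norm2_0 : norm2 (0 : V) = 0.
Proof. by apply/eqP; rewrite norm2_eq0. Qed.

Lemma norm2_gt0 a : a != 0 -> 0 < norm2 a.
Proof. by move=> a0; rewrite lt_def norm2_eq0 a0 norm2_ge0. Qed.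

Lemma norm2Z r a : norm2 (r *: a) = `|r| * norm2 a.
Proof. by rewrite !norm2E dotvZl dotvZr mulrA -expr2 sqrtrM ?sqr_ge0 // sqrtr_sqr. Qed.

Lemma dotv_sqr_le a b : dotv a b ^+ 2 <= dotv a a * dotv b b.
Proof.
pose lagrange := \sum_k \sum_l (a 0 k * b 0 l - a 0 l * b 0 k) ^+ 2.
have lagrange_ge0 : 0 <= lagrange.
  by apply: sumr_ge0 => k _; apply: sumr_ge0 => l _; exact: sqr_ge0.
have sum2M (u v : 'I_N -> R) : \sum_k \sum_l u k * v l = (\sum_k u k) * (\sum_l v l).
  by rewrite mulr_suml; apply: eq_bigr => k _; rewrite mulr_sumr.
have : lagrange + 2 * dotv a b ^+ 2 = 2 * (dotv a a * dotv b b).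
  rewrite [RHS](_ : _ = dotv a a * dotv b b + dotv b b * dotv a a); last by ring.
  rewrite expr2 /lagrange /dotv -!sum2M mulr_sumr -!big_split /=.
  apply: eq_bigr => k _; rewrite mulr_sumr -!big_split; apply: eq_bigr => l _ /=.
  ring.
lra.
Qed.

Lemma ler_dotv a b : `|dotv a b| <= norm2 a * norm2 b.
Proof.
rewrite !norm2E -sqrtrM ?dotvv_ge0 // -sqrtr_sqr ler_wsqrtr //.
exact: dotv_sqr_le.
Qed.

Lemma mxv_coord A w k : mxv A w 0 k = dotv (row k A) w.
Proof. by rewrite mxE; apply: eq_bigr => l _; rewrite mxE. Qed.

Lemma specnorm_ub A w : norm2 w = 1 -> norm2 (mxv A w) <= specnorm A.
Proof.
move=> w1; apply: ub_le_sup; last by exists w.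
exists (Num.sqrt (\sum_k dotv (row k A) (row k A))) => _ [z /= /norm2_eq1 z1 <-].
rewrite norm2E dotvv ler_wsqrtr // ler_sum // => k _.
by rewrite mxv_coord; apply: le_trans (dotv_sqr_le _ _) _; rewrite z1 mulr1.
Qed.

Lemma specnorm_ge0 A w : norm2 w = 1 -> 0 <= specnorm A.
Proof. by move=> w1; apply: le_trans (specnorm_ub A w1); exact: norm2_ge0. Qed.

Lemma quad_form_le A w : norm2 w = 1 -> `|dotv w (mxv A w)| <= specnorm A.
Proof.
by move=> w1; apply: le_trans (ler_dotv _ _) _; rewrite w1 mul1r; exact: specnorm_ub.
Qed.

Lemma ball_rowP a (e : R) b : ball a e b <-> 0 < e /\ forall k, `|a 0 k - b 0 k| < e.
Proof.
split=> -[e0 ab]; split=> //; first by move=> k; exact: ab.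
by move=> i k; rewrite (ord1 i); exact: ab.
Qed.

Lemma normr_coord_le a k : `|a 0 k| <= `|a|.
Proof. by rewrite [leRHS]mx_normrE; exact: (le_bigmax _ _ (0, k)). Qed.

Lemma dotv_continuous a : continuous (dotv a).
Proof.
apply: continuous_big => [|k _ w]; first exact: add_continuous.
by apply: continuousM; [exact: cst_continuous | exact: coord_continuous].
Qed.

End EuclideanSpace.

Section Differentiation.
Variables (R : realType) (N : nat).
Local Notation V := 'rV[R]_N.
Implicit Types (F : V -> R) (x y z v : V).

Definition grad F x : V := \row_k partial F k x.

Definition C1_at F x : Prop :=
  (\forall y \near x, forall k, derivable F y (ev R k)) /\
  forall k, {for x, continuous (partial F k)}.

Lemma is_derive_line F z v (s : R) : derivable F (z + s *: v) v ->
  is_derive s 1 (fun t => F (z + t *: v)) ('D_v F (z + s *: v)).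
Proof.
move=> dF.
have shift_line : (fun h : R => h^-1 *: (((fun t => F (z + t *: v)) \o shift s) (h *: 1)
      - F (z + s *: v))) =
    (fun h : R => h^-1 *: ((F \o shift (z + s *: v)) (h *: v) - F (z + s *: v))).
  by apply/funext => h /=; rewrite [h *: 1]mulr1 scalerDl addrCA addrA.
by apply: DeriveDef; rewrite /derivable /derive shift_line.
Qed.

Lemma line_increment F z v (a c e : R) :
  (forall s, Num.min 0 a <= s <= Num.max 0 a ->
     derivable F (z + s *: v) v /\ `|'D_v F (z + s *: v) - c| <= e) ->
  `|F (z + a *: v) - F z - a * c| <= e * `|a|.
Proof.
move=> hder; pose g s := F (z + s *: v) - s *: c.
have -> : F (z + a *: v) - F z - a * c = g a - g 0.
  by rewrite /g scale0r addr0 scale0r subr0 addrAC.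
rewrite -[a in e * `|a|]subr0; apply: ler_abs_increment => s /hder[dFs dFs_c].
split; last exact: dFs_c.
apply: is_deriveB; first exact: is_derive_line.
by have := is_deriveZl c (is_derive_id s 1); rewrite scale1r.
Qed.

Definition trunc_row (j : nat) (h : V) : V := \row_k (if (k < j)%N then h 0 k else 0).

Lemma trunc_row0 (h : V) : trunc_row 0 h = 0.
Proof. by apply/rowP => k; rewrite !mxE. Qed.

Lemma trunc_row_full (h : V) : trunc_row N h = h.
Proof. by apply/rowP => k; rewrite mxE ltn_ord. Qed.

Lemma trunc_rowS (h : V) (j : 'I_N) : trunc_row j.+1 h = trunc_row j h + h 0 j *: ev R j.
Proof.
apply/rowP => k; rewrite !mxE eqxx /= ltnS leq_eqVlt.
case: (eqVneq k j) => [->|kj]; first by rewrite eqxx ltnn mulr1 add0r.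
by move: kj; rewrite -val_eqE /= => /negPf ->; rewrite mulr0 addr0.
Qed.

Lemma trunc_row_box (h : V) (j : 'I_N) (s : R) k : `|s| <= `|h 0 j| ->
  `|(trunc_row j h + s *: ev R j) 0 k| <= `|h 0 k|.
Proof.
move=> sj; rewrite !mxE eqxx /=.
case: (eqVneq k j) => [->|kj]; first by rewrite ltnn mulr1 add0r.
by rewrite mulr0 addr0; case: ifP; rewrite ?normr0.
Qed.

(* Walk from [x] to [x + h] one coordinate at a time, applying the mean value
   inequality on each axis-parallel segment. *)
Lemma partials_increment F x (h : V) (e : R) :
  (forall z, (forall k, `|z 0 k - x 0 k| <= `|h 0 k|) ->
     forall k, derivable F z (ev R k) /\ `|partial F k z - partial F k x| <= e) ->
  `|F (x + h) - F x - dotv (grad F x) h| <= e * \sum_k `|h 0 k|.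
Proof.
move=> hbox.
have step (j : 'I_N) : `|F (x + trunc_row j.+1 h) - F (x + trunc_row j h)
    - h 0 j * partial F j x| <= e * `|h 0 j|.
  rewrite trunc_rowS addrA; apply: line_increment => s sI.
  have [|dF dF_x] := hbox (x + trunc_row j h + s *: ev R j) _ j.
    move=> k; rewrite -addrA [(x + _) 0 k]mxE [x 0 k + _]addrC addrK.
    exact/trunc_row_box/normr_le_between0.
  exact: (conj dF dF_x).
have -> : F (x + h) - F x =
    \sum_(j < N) (F (x + trunc_row j.+1 h) - F (x + trunc_row j h)).
  rewrite -(big_mkord xpredT (fun n => F (x + trunc_row n.+1 h) - F (x + trunc_row n h))).
  by rewrite telescope_sumr // trunc_row_full trunc_row0 addr0.
rewrite /dotv -sumrB mulr_sumr; apply: le_trans (ler_norm_sum _ _ _) _.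
by apply: ler_sum => j _; rewrite mxE mulrC; exact: step.
Qed.

Lemma C1_remainder F x : C1_at F x -> forall e : R, 0 < e ->
  \forall y \near x, `|F y - F x - dotv (grad F x) (y - x)| <= e * `|y - x|.
Proof.
(* [sum_k |h_k| <= N |h|] for the max norm [|h|] *)
move=> [dF cF] e e0; pose e' := e / N.+1%:R.
have e'0 : 0 < e' by rewrite divr_gt0.
have : \forall z \near x, (forall k, derivable F z (ev R k)) /\
    forall k, `|partial F k z - partial F k x| <= e'.
  near=> z; split; first by near: z.
  near: z; apply: filter_forall => k.
  by apply: filterS ((cvgrPdist_le _ _).1 (cF k) e' e'0) => z; rewrite distrC.
move=> /nbhs_ballP[d /= d0 hball]; near=> y.
have /ball_rowP[_ xy] : ball x d y by near: y; apply: nbhsx_ballx.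
rewrite -[y in F y](subrKC x).
apply: le_trans (partials_increment (e := e') _) _.
  move=> z zbox k; have zball : ball x d z.
    apply/ball_rowP; split=> // l; rewrite distrC; apply: le_lt_trans (zbox l) _.
    by rewrite !mxE distrC.
  by have [dFz cFz] := hball z zball; split; [exact: dFz | exact: cFz].
apply: le_trans (ler_wpM2l (ltW e'0) (ler_sum _ (fun k _ => normr_coord_le (y - x) k))) _.
rewrite sumr_const card_ord -mulr_natr mulrCA mulrC ler_wpM2r //.
by rewrite /e' mulrAC ler_pdivrMr ?ltr0n // ler_wpM2l ?(ltW e0) // ler_nat.
Unshelve. all: by end_near.
Qed.

Lemma C1_remainder_curve F (p : R -> V) (t : R) (dp : V) :
  C1_at F (p t) -> is_derive t 1 p dp ->
  (fun h => h^-1 * (F (p (h + t)) - F (p t) - dotv (grad F (p t)) (p (h + t) - p t)))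
    @ 0^' --> 0.
Proof.
move=> C1F dpt; set x := p t.
have q_cvg := is_derive_quotient dpt; have p_cvg := is_derive_shift_cvg dpt.
apply/cvgr0Pnorm_le => eps eps0.
pose M := `|dp| + 1; have M0 : 0 < M by rewrite ltr_wpDl.
near=> h.
have remB : `|F (p (h + t)) - F x - dotv (grad F x) (p (h + t) - x)|
    <= eps / M * `|p (h + t) - x|.
  near: h; apply: (p_cvg (fun y =>
    `|F y - F x - dotv (grad F x) (y - x)| <= eps / M * `|y - x|)).
  exact: C1_remainder C1F _ (divr_gt0 eps0 M0).
have qB : `|h^-1 *: (p (h + t) - x)| <= M.
  near: h; apply: filterS ((cvgrPdist_le _ _).1 q_cvg 1 ltr01) => h dpq.
  rewrite -[_ *: _](subrKC dp) addrC (le_trans (ler_normD _ _)) //.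
  by rewrite /M addrC lerD2l distrC.
rewrite normrM normfV (le_trans (ler_wpM2l _ remB)) ?invr_ge0 //.
rewrite mulrCA -normfV -normrZ -[leRHS](mulfVK (lt0r_neq0 M0)).
by rewrite ler_wpM2l ?divr_ge0 ?(ltW eps0) ?(ltW M0).
Unshelve. all: by end_near.
Qed.

Lemma is_derive_comp_C1 F (p : R -> V) (t : R) (dp : V) :
  C1_at F (p t) -> is_derive t 1 p dp ->
  is_derive t 1 (F \o p) (dotv (grad F (p t)) dp).
Proof.
move=> C1F dpt; set g := grad F (p t).
have quot : (fun h => h^-1 *: (((F \o p) \o shift t) (h *: 1) - (F \o p) t)) @ 0^'
    --> dotv g dp.
  have -> : (fun h => h^-1 *: (((F \o p) \o shift t) (h *: 1) - (F \o p) t)) =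
      (fun h => dotv g (h^-1 *: (p (h + t) - p t)) + h^-1 *
         (F (p (h + t)) - F (p t) - dotv g (p (h + t) - p t))).
    apply/funext => h; rewrite dotvZr /= [h *: 1]mulr1.
    by rewrite -mulrDr addrCA subrr addr0.
  rewrite -[dotv _ _]addr0; apply: cvgD (C1_remainder_curve C1F dpt).
  by apply: continuous_cvg (is_derive_quotient dpt); exact: dotv_continuous.
by apply: DeriveDef; [apply/cvg_ex; exists (dotv g dp) | exact: cvg_lim quot].
Qed.

Lemma is_derive_line_C1 F z v (t : R) : C1_at F (z + t *: v) ->
  is_derive t 1 (fun s => F (z + s *: v)) (dotv (grad F (z + t *: v)) v).
Proof. by move=> C1F; exact: (is_derive_comp_C1 C1F (is_derive_affine z v t)). Qed.

Lemma is_derive_rowP (p : R -> V) (t : R) (dp : V) :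
  is_derive t 1 p dp <-> forall k, is_derive t 1 (fun s => p s 0 k) (dp 0 k).
Proof.
split=> [dpt k|dpk].
  have dp_t : derivable p t 1 by exact: ex_derive.
  have dpk : derivable (fun s => p s 0 k) t 1 by move/derivable_mxP: dp_t; exact.
  apply: DeriveDef => //.
  by rewrite -(@derive_val _ _ _ _ _ _ _ dpt) derive_mx // mxE.
have dp_t : derivable p t 1.
  by apply/derivable_mxP => i k; rewrite (ord1 i); exact: ex_derive.
apply: DeriveDef => //; rewrite derive_mx //; apply/rowP => k.
by rewrite !mxE (@derive_val _ _ _ _ _ _ _ (dpk k)).
Qed.

Lemma is_derive_dotv (a b : R -> V) (t : R) (da db : V) :
  is_derive t 1 a da -> is_derive t 1 b db ->
  is_derive t 1 (fun s => dotv (a s) (b s)) (dotv (a t) db + dotv da (b t)).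
Proof.
move=> /is_derive_rowP dat /is_derive_rowP dbt.
rewrite /dotv -big_split /=.
have -> : (fun s => \sum_k a s 0 k * b s 0 k) = \sum_k (fun s => a s 0 k * b s 0 k).
  by apply/funext => s; rewrite fct_sumE.
apply: is_derive_sum => k; apply: is_derive_eq (is_deriveM (dat k) (dbt k)) _.
by rewrite /GRing.scale /= mulrC [da 0 k * _]mulrC.
Qed.

Lemma is_derive_grad_comp F (p : R -> V) (t : R) (dp : V) :
  (forall k, C1_at (partial F k) (p t)) -> is_derive t 1 p dp ->
  is_derive t 1 (grad F \o p) (\row_k dotv (grad (partial F k) (p t)) dp).
Proof.
move=> C1F dpt; apply/is_derive_rowP => k; rewrite mxE.
have -> : (fun s => (grad F \o p) s 0 k) = partial F k \o p.
  by apply/funext => s; rewrite /= mxE.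
exact: is_derive_comp_C1.
Qed.

Lemma C2_on_C1_at (U : set V) F x : C2_on U F -> (\forall y \near x, U y) ->
  C1_at F x /\ forall k, C1_at (partial F k) x.
Proof.
move=> C2F Ux; have [_ C2Fx] := C2F x (nbhs_singleton Ux).
split; [split|move=> k; split].
- by apply: filterS Ux => y /C2F[_ dFy] k; have [] := dFy k.
- by move=> k; have [_ []] := C2Fx k.
- by apply: filterS Ux => y /C2F[_ dFy] l; have [_ [_ /(_ l) []]] := dFy k.
- by move=> l; have [_ [_ /(_ l) []]] := C2Fx k.
Qed.

End Differentiation.

Section Circles.
Variables (R : realType) (N : nat).
Local Notation V := 'rV[R]_N.
Implicit Types (a u d : V) (t : R).

Definition circle a u d t : V := a + cos t *: u + sin t *: d.

Lemma is_derive_circle a u d t : is_derive t 1 (circle a u d) (circle 0 d (- u) t).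
Proof.
apply: is_derive_eq (is_deriveD (is_deriveD (is_derive_cst a t 1)
  (is_deriveZl u (is_derive_cos t))) (is_deriveZl d (is_derive_sin t))) _.
by rewrite /circle !add0r scalerN scaleNr addrC.
Qed.

Lemma circle_ends a u d : circle a u d (- pi) = circle a u d pi.
Proof. by rewrite /circle cosN sinN sinpi oppr0. Qed.

Lemma circle0 a u d : circle a u d 0 = a + u.
Proof. by rewrite /circle cos0 sin0 scale1r scale0r addr0. Qed.

Lemma circleN u d t : circle 0 (- u) (- d) t = - circle 0 u d t.
Proof. by rewrite /circle !add0r !scalerN opprD. Qed.

Lemma norm2_circle0 u d t : dotv u u = 1 -> dotv d d = 1 -> dotv u d = 0 ->
  norm2 (circle 0 u d t) = 1.
Proof.
move=> uu dd ud; apply/norm2_eq1; rewrite /circle add0r.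
rewrite !(dotvDl, dotvDr, dotvZl, dotvZr) uu dd ud [dotv d u]dotvC ud.
by rewrite !mulr0 !mulr1 addr0 add0r -!expr2 cos2Dsin2.
Qed.

End Circles.

Section Blocks.
Variables (R : realType) (N m : nat) (blk : 'I_N -> option 'I_m).
Local Notation V := 'rV[R]_N.
Local Notation dom := (dom_nz blk).
Local Notation block := (blockvec blk).
Implicit Types (a u d v w x y : V).

Lemma blockvecE b x k : block b x 0 k = if blk k == b then x 0 k else 0.
Proof. by rewrite mxE. Qed.

Fact blockvec_is_linear b : linear (block b : V -> V).
Proof.
by move=> r x y; apply/rowP => k; rewrite !mxE; case: ifP; rewrite ?mulr0 ?addr0.
Qed.

HB.instance Definition _ b :=
  GRing.isLinear.Build R V V *:%R (block b) (blockvec_is_linear b).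

Lemma blockvec_id b x : block b (block b x) = block b x.
Proof. by apply/rowP => k; rewrite !mxE; case: eqP. Qed.

Lemma blockvec_ortho b b' x : b != b' -> block b (block b' x) = 0.
Proof.
move=> bb'; apply/rowP => k; rewrite !mxE.
by case: eqP => // ->; rewrite (negPf bb').
Qed.

Lemma dotv_blockvec b x y : dotv (block b x) y = dotv x (block b y).
Proof. by apply: eq_bigr => k _; rewrite !mxE; case: ifP; rewrite ?mul0r ?mulr0. Qed.

Lemma grad_blockE (f : V -> R) i x : grad_block blk f i x = block (Some i) (grad f x).
Proof. by apply/rowP => k; rewrite !mxE. Qed.

Definition unit_blocks v := forall j, norm2 (block (Some j) v) = 1.

Lemma unit_blocks_dom v : unit_blocks v -> dom v.
Proof. by move=> v1 j; rewrite -norm2_eq0 v1 oner_eq0. Qed.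

Lemma dom_nz_nbhs x : dom x -> \forall y \near x, dom y.
Proof.
move=> dx; near=> y; near: y; apply: filter_forall => j.
have [k] : exists k, block (Some j) x 0 k != 0.
  apply/existsP; apply: contraR (dx j) => /existsPn x0.
  by apply/eqP/rowP => k; rewrite [RHS]mxE; exact/eqP/negbNE/x0.
rewrite blockvecE; case: ifP => [bk xk|]; last by rewrite eqxx.
apply: filterS (cvgr_neq0 (x 0 k) (@coord_continuous _ _ _ 0 k x) xk) => y yk.
by apply/eqP => /rowP/(_ k); rewrite blockvecE bk mxE; exact/eqP.
Unshelve. all: by end_near.
Qed.

Lemma dom_scale_block j (c : R) x : 0 < c -> dom x -> dom (scale_block blk j c x).
Proof.
move=> c0 dx j'; apply: contra (dx j') => /eqP/rowP x0; apply/eqP/rowP => k.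
move: (x0 k); rewrite !mxE; case: ifP => // _; case: ifP => // _ /eqP.
by rewrite mulf_eq0 gt_eqF // => /eqP.
Qed.

Definition scale_blocks (c : 'I_m -> R) x : V :=
  \row_k (if blk k is Some j then c j * x 0 k else x 0 k).

Lemma foldr_scale_block (c : 'I_m -> R) (s : seq 'I_m) x : uniq s ->
  foldr (fun j => scale_block blk j (c j)) x s =
  \row_k (if blk k is Some j then (if j \in s then c j else 1) * x 0 k else x 0 k).
Proof.
elim: s => [_|j s IHs /= /andP[js us]]; apply/rowP => k; rewrite !mxE.
  by case: (blk k) => // j; rewrite mul1r.
rewrite IHs // mxE; case: (blk k) => [j'|] //; rewrite inE.
case: (eqVneq j' j) => [->|j'j]; first by rewrite eqxx (negPf js) mul1r.
by rewrite (inj_eq Some_inj) (negPf j'j).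
Qed.

Lemma scale_blocks_foldr (c : 'I_m -> R) x :
  scale_blocks c x = foldr (fun j => scale_block blk j (c j)) x (enum 'I_m).
Proof.
rewrite foldr_scale_block ?enum_uniq //; apply/rowP => k; rewrite !mxE.
by case: (blk k) => // j; rewrite mem_enum.
Qed.

Lemma scale_blocks_line (c : 'I_m -> R) x k i (s : R) : blk k = Some i ->
  scale_blocks c (x + s *: ev R k) = scale_blocks c x + s *: (c i *: ev R k).
Proof.
move=> bk; apply/rowP => l; rewrite !mxE.
case: (eqVneq l k) => [->|lk]; first by rewrite bk !eqxx /=; ring.
by case: (blk l) => [j|]; rewrite andbF !mulr0 !addr0.
Qed.

Lemma blockvec_scale_blocks (c : 'I_m -> R) j x :
  block (Some j) (scale_blocks c x) = c j *: block (Some j) x.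
Proof. by apply/rowP => k; rewrite !mxE; case: eqP => [->|]; rewrite ?mulr0. Qed.

Lemma blockvec_circle b a u d t :
  block b (circle a u d t) = circle (block b a) (block b u) (block b d) t.
Proof. by rewrite /circle !linearD !linearZ. Qed.

Lemma blockvec_great_circle i v d (t : R) : block (Some i) d = d ->
  block (Some i) (circle (v - block (Some i) v) (block (Some i) v) d t) =
  circle 0 (block (Some i) v) d t.
Proof. by move=> dI; rewrite blockvec_circle linearB /= blockvec_id subrr dI. Qed.

Lemma circle_unit_blocks i v d : unit_blocks v -> block (Some i) d = d ->
  dotv d d = 1 -> dotv (block (Some i) v) d = 0 ->
  forall t, unit_blocks (circle (v - block (Some i) v) (block (Some i) v) d t).
Proof.
move=> v1 dI dd ud t j.
have [->|ji] := eqVneq j i.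
  by rewrite blockvec_great_circle //; apply: norm2_circle0 => //; exact/norm2_eq1.
have ortho x : block (Some j) (block (Some i) x) = 0.
  by apply: blockvec_ortho; rewrite (inj_eq Some_inj).
by rewrite blockvec_circle -dI linearB /= !ortho subr0 /circle !scaler0 !addr0.
Qed.

Lemma hess_block_quad (f : V -> R) i x w : block (Some i) w = w ->
  dotv w (mxv (hess_block blk f i x) w) = dotv (\row_k dotv (grad (partial f k) x) w) w.
Proof.
move=> wI; have wout k : blk k != Some i -> w 0 k = 0.
  by move=> bk; rewrite -wI blockvecE (negPf bk).
transitivity (\sum_l \sum_k w 0 l * partial (partial f k) l x * w 0 k).
  apply: eq_bigr => l _; rewrite mxE mulr_sumr; apply: eq_bigr => k _; rewrite mxE.
  have [bl|bl] := eqVneq (blk l) (Some i); last by rewrite wout // !mul0r.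
  have [bk|bk] := eqVneq (blk k) (Some i); last by rewrite (wout k) // !mulr0.
  by rewrite mulrA.
rewrite exchange_big; apply: eq_bigr => k _; rewrite !mxE mulr_suml.
by apply: eq_bigr => l _; rewrite mxE [w 0 l * _]mulrC.
Qed.

End Blocks.

Section ScaleInvariantLoss.
Variables (R : realType) (N m : nat) (blk : 'I_N -> option 'I_m) (f : 'rV[R]_N -> R).
Local Notation V := 'rV[R]_N.
Local Notation dom := (dom_nz blk).
Local Notation block := (blockvec blk).
Implicit Types (u v d x y : V).
Hypothesis f_C2 : C2_on dom f.
Hypothesis f_scale_inv : forall (j : 'I_m) (c : R) (x : V),
  dom x -> 0 < c -> f (scale_block blk j c x) = f x.

Lemma C1_at_f x : dom x -> C1_at f x.
Proof. by move=> /dom_nz_nbhs/(C2_on_C1_at f_C2)[]. Qed.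

Lemma C1_at_partial x k : dom x -> C1_at (partial f k) x.
Proof. by move=> /dom_nz_nbhs/(C2_on_C1_at f_C2)[_]. Qed.

Lemma scale_blocks_invariant (c : 'I_m -> R) x : (forall j, 0 < c j) -> dom x ->
  dom (scale_blocks blk c x) /\ f (scale_blocks blk c x) = f x.
Proof.
move=> c0 dx; rewrite scale_blocks_foldr; elim: (enum 'I_m) => [|j s [ds fs]] //=.
by split; [exact: dom_scale_block | rewrite f_scale_inv].
Qed.

Lemma euler_block i y : dom y -> dotv (grad f y) (block (Some i) y) = 0.
Proof.
move=> dy; set b := block (Some i) y.
have scale_line c : scale_block blk i c y = (y - b) + c *: b.
  by apply/rowP => k; rewrite /b !mxE; case: ifP => _; ring.
have y_line : y = (y - b) + 1 *: b by rewrite scale1r subrK.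
have c_pos : \forall c \near (1 : R), 0 < c := cvgr_gt 1 (@cvg_id _ _) 0 ltr01.
have f_cst : is_derive (1 : R) 1 (fun c => f ((y - b) + c *: b)) 0.
  apply: (near_eq_is_derive _ (is_derive_cst (f y) (1 : R) 1)).
  near=> c; rewrite /= -scale_line f_scale_inv //.
  by near: c; exact: c_pos.
have := @is_derive_line_C1 _ _ f (y - b) b 1; rewrite -y_line.
by move=> /(_ (C1_at_f dy)) /is_derive_unique; apply.
Unshelve. all: by end_near.
Qed.

Lemma grad_block_scale_blocks (c : 'I_m -> R) i x : (forall j, 0 < c j) -> dom x ->
  grad_block blk f i x = c i *: grad_block blk f i (scale_blocks blk c x).
Proof.
move=> c0 dx; apply/rowP => k; rewrite !mxE; case: eqP => [bk|]; last by rewrite mulr0.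
set xh := scale_blocks blk c x.
have [dxh _] := scale_blocks_invariant c0 dx.
have line_dom : \forall s \near (0 : R), dom (x + s *: ev R k).
  apply: (is_derive_continuous (is_derive_affine x (ev R k) 0)).
  by rewrite /= scale0r addr0; exact: dom_nz_nbhs.
have f_line : \forall s \near (0 : R), f (xh + s *: (c i *: ev R k)) = f (x + s *: ev R k).
  apply: filterS line_dom => s ds; rewrite -scale_blocks_line //.
  by have [_ ->] := scale_blocks_invariant c0 ds.
have d_x := @is_derive_line_C1 _ _ f x (ev R k) 0.
have d_xh := @is_derive_line_C1 _ _ f xh (c i *: ev R k) 0.
rewrite !scale0r !addr0 in d_x d_xh.
have := is_derive_unique (d_x (C1_at_f dx)) (near_eq_is_derive f_line (d_xh (C1_at_f dxh))).
by rewrite dotv_ev dotvZr dotv_ev !mxE.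
Qed.

Variables (i : 'I_m) (Lii : R).
Hypothesis hess_le : forall v, unit_blocks blk v -> specnorm (hess_block blk f i v) <= Lii.

(* The acceleration [circle 0 (- u) (- d) t] of the great circle is minus its
   i-th block, which Euler's identity makes orthogonal to the gradient; only
   the Hessian term of the second derivative remains. *)
Lemma circle_slope_derive_le v d (t : R) (u := block (Some i) v) :
  unit_blocks blk v -> block (Some i) d = d -> dotv d d = 1 -> dotv u d = 0 ->
  exists2 D, is_derive t 1
      (fun s => dotv (grad f (circle (v - u) u d s)) (circle 0 d (- u) s)) D
    & `|D| <= Lii.
Proof.
move=> v1 dI dd ud; set P := circle (v - u) u d.
have P1 : unit_blocks blk (P t) := circle_unit_blocks v1 dI dd ud t.
have C1P k := C1_at_partial k (unit_blocks_dom P1).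
eexists.
  exact: is_derive_dotv (is_derive_grad_comp C1P (is_derive_circle _ _ _ t))
    (is_derive_circle _ _ _ t).
set w := circle 0 d (- u) t.
have uu : dotv u u = 1 by apply/norm2_eq1; exact: v1.
have w1 : norm2 w = 1.
  by apply: norm2_circle0; rewrite ?dotvNl ?dotvNr ?opprK ?uu // dotvC ud oppr0.
have wI : block (Some i) w = w.
  by rewrite /w /circle !linearD !linearZ linearN /= blockvec_id dI linear0.
rewrite circleN -blockvec_great_circle // dotvNr euler_block ?oppr0 ?add0r.
  rewrite -(hess_block_quad f (P t) wI).
  exact: le_trans (quad_form_le _ w1) (hess_le P1).
exact: unit_blocks_dom P1.
Qed.

Lemma grad_block_unit_le v : unit_blocks blk v -> norm2 (grad_block blk f i v) <= pi * Lii.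
Proof.
move=> v1; rewrite grad_blockE; set G := block (Some i) (grad f v).
set u := block (Some i) v.
have Lii_ge0 : 0 <= Lii := le_trans (specnorm_ge0 _ (v1 i)) (hess_le v1).
have [->|G0] := eqVneq G 0; first by rewrite norm2_0 mulr_ge0 ?pi_ge0.
have g0 := norm2_gt0 G0; set g := norm2 G in g0 *.
pose d := g^-1 *: G.
have dI : block (Some i) d = d by rewrite linearZ /= blockvec_id.
have GG : dotv (grad f v) G = g ^+ 2.
  by rewrite norm2_sqr /G dotv_blockvec blockvec_id.
have dd : dotv d d = 1.
  by rewrite dotvZl dotvZr -norm2_sqr -/g mulrA -expr2 -exprMn mulVf ?gt_eqF ?expr1n.
have ud : dotv u d = 0.
  rewrite dotvZr dotv_blockvec blockvec_id -dotv_blockvec dotvC.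
  by rewrite euler_block ?mulr0 //; exact: unit_blocks_dom.
have dphi (t : R) : is_derive t 1 (f \o circle (v - u) u d)
    (dotv (grad f (circle (v - u) u d t)) (circle 0 d (- u) t)).
  apply: is_derive_comp_C1 (is_derive_circle _ _ _ t).
  exact/C1_at_f/unit_blocks_dom/circle_unit_blocks.
have := abs_derive_mid_le (pi_gt0 R) dphi (fun t => circle_slope_derive_le t v1 dI dd ud)
  (congr1 f (circle_ends _ _ _)).
by rewrite circle0 subrK circle0 add0r dotvZr GG expr2 mulKf ?gt_eqF // ger0_norm // ltW.
Qed.

End ScaleInvariantLoss.

Theorem lemmaA1 (R : realType) (m N : nat) (blk : 'I_N -> option 'I_m)
  (f : 'rV[R]_N -> R) (i : 'I_m) (Lii : R) :
  C2_on (dom_nz blk) f ->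
  (forall (j : 'I_m) (c : R) (x : 'rV[R]_N), dom_nz blk x -> 0 < c ->
     f (scale_block blk j c x) = f x) ->
  (forall v : 'rV[R]_N, (forall j : 'I_m, norm2 (blockvec blk (Some j) v) = 1) ->
     specnorm (hess_block blk f i v) <= Lii) ->
  forall x : 'rV[R]_N, dom_nz blk x ->
    norm2 (grad_block blk f i x) <= pi * Lii / norm2 (blockvec blk (Some i) x).
Proof.
move=> f_C2 f_scale_inv hess_le x dx.
pose c j := (norm2 (blockvec blk (Some j) x))^-1.
have c_gt0 j : 0 < c j by rewrite invr_gt0 norm2_gt0.
have xh1 : unit_blocks blk (scale_blocks blk c x).
  move=> j; rewrite blockvec_scale_blocks norm2Z gtr0_norm //.
  by rewrite mulVf // gt_eqF // norm2_gt0.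
rewrite (grad_block_scale_blocks f_C2 f_scale_inv i c_gt0 dx) norm2Z gtr0_norm //.
rewrite mulrC; apply: ler_wpM2r; first exact: ltW.
exact: (grad_block_unit_le f_C2 f_scale_inv hess_le xh1).
Qed.
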